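(* Let $G=(V,E)$ be a connected graph on $n$ vertices with $\delta(G)\geq 3$ and vertex connectivity $\kappa(G)=1$ (that is, $G$ has a cut vertex). Then $F(G)\geq \lfloor (n+1)/2\rfloor$.
   Context: All graphs are finite and simple. A vertex cut of a connected graph is a set of vertices whose removal leaves a disconnected or trivial graph; $\kappa(G)$ is the minimum size of a vertex cut. Given a graph $G=(V,E)$ and a set $S\subseteq V$ of filled vertices, the color change rule is: if a filled vertex $v$ has exactly one unfilled neighbor $w$, then $w$ becomes filled. The derived set of $S$ is the set of filled vertices obtained after applying the rule until no further application is possible. $S$ is a zero forcing set if its derived set is $V$; otherwise $S$ is a failed zero forcing set. The failed zero forcing number $F(G)$ is the maximum size of a failed zero forcing set of $G$. *)

(* Simple graphs as symmetric irreflexive relations on a finType. *)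
From mathcomp Require Import all_boot.
Set Implicit Arguments. Unset Strict Implicit. Unset Printing Implicit Defensive.

Section Graphs.
Variables (T : finType) (e : rel T).

Definition nbhd (v : T) : {set T} := [set u | e v u].

Definition connected_on (A : {set T}) : bool :=
  [forall x in A, forall y in A,
     connect [rel u w | [&& e u w, u \in A & w \in A]] x y].

Definition connected_graph : bool := connected_on [set: T].

Definition vertex_cut (S : {set T}) : bool :=
  ~~ connected_on (~: S) || (#|~: S| <= 1).

(* vertex connectivity: minimum size of a vertex cut (setT is always one) *)
Definition kappa : nat :=
  \big[minn/#|T|]_(S : {set T} | vertex_cut S) #|S|.

Definition force_step (S : {set T}) : {set T} :=
  S :|: [set w | [exists v in S,
     (w \notin S) && (nbhd v :\: S == [set w])]].

(* derived set: iterate the rule until it stabilises (#|T| rounds suffice,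
   as each non-stable round fills at least one new vertex) *)
Definition derived (S : {set T}) : {set T} := iter #|T| force_step S.

Definition zero_forcing (S : {set T}) : bool := derived S == [set: T].

Definition failed_zero_forcing (S : {set T}) : bool := ~~ zero_forcing S.

Definition F_number : nat :=
  \max_(S : {set T} | failed_zero_forcing S) #|S|.

End Graphs.

(** A cut vertex [v] splits [G - v] into components; let [C] be a smallest
    one, so [2 |C| <= n - 1].  If [v] has exactly one neighbour [w] in [C],
    fill everything outside [C - w]; otherwise fill everything outside [C].
    In both cases no filled vertex has exactly one unfilled neighbour: the
    vertices outside [C + v] see no vertex of [C], [v] sees zero or at least
    two unfilled vertices, and [w] has at least [3 - 1] neighbours in [C - w].
    The filled set is thus a failed zero forcing set of size at least
    [n - |C| >= (n + 1) / 2]. *)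

From HB Require Import structures.
From mathcomp Require Import all_boot.
From mathcomp Require Import zify.
Set Implicit Arguments. Unset Strict Implicit. Unset Printing Implicit Defensive.

Section ZeroForcing.
Variables (T : finType) (e : rel T).

Definition stalled (S : {set T}) : Prop :=
  forall s, s \in S -> #|nbhd e s :\: S| != 1.

Lemma force_step_stalled (S : {set T}) : stalled S -> force_step e S = S.
Proof.
move=> stS; apply/setUidPl/subsetP => w.
rewrite inE => /exists_inP [s sS /andP [_ /eqP sw]].
by have := stS s sS; rewrite sw cards1.
Qed.

Lemma derived_stalled (S : {set T}) : stalled S -> derived e S = S.
Proof.
by move=> stS; rewrite /derived; elim: #|T| => //= k ->; apply: force_step_stalled.
Qed.

Lemma stalled_le_F_number (S : {set T}) :
  stalled S -> S != setT -> #|S| <= F_number e.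
Proof.
move=> stS ST; apply: (leq_bigmax_cond (P := failed_zero_forcing e)).
by rewrite /failed_zero_forcing /zero_forcing derived_stalled.
Qed.

Lemma stalled_setC (X : {set T}) :
  (forall s, s \notin X -> #|nbhd e s :&: X| != 1) -> stalled (~: X).
Proof. by move=> hX s; rewrite inE setDE setCK; apply: hX. Qed.

End ZeroForcing.

(** [kappa] folds [minn] from the non-neutral seed [#|T|]; [bigD1] only needs
    [minn] to be associative and commutative. *)
HB.instance Definition _ := SemiGroup.isComLaw.Build nat minn minnA minnC.

Section Connectivity.
Variables (T : finType) (e : rel T).

Lemma kappa_min (S : {set T}) : vertex_cut e S -> kappa e <= #|S|.
Proof. by move=> cutS; rewrite /kappa (bigD1 S) //= geq_minl. Qed.

Lemma vertex_cutT : vertex_cut e setT.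
Proof. by rewrite /vertex_cut setCT cards0 orbT. Qed.

Lemma kappa_attained : exists2 S, vertex_cut e S & #|S| <= kappa e.
Proof.
case: (arg_minnP (fun S : {set T} => #|S|) vertex_cutT) => S cutS minS.
exists S => //; rewrite /kappa; apply: (big_ind (fun m => #|S| <= m)).
- by rewrite -cardsT; apply: minS vertex_cutT.
- by move=> m1 m2; rewrite leq_min => ->.
- exact: minS.
Qed.

Lemma cut_vertex_of_kappa1 :
  connected_graph e -> 2 < #|T| -> kappa e = 1 ->
  exists v, ~~ connected_on e [set~ v].
Proof.
move=> conn n3 kappa1; have [S cutS] := kappa_attained; rewrite kappa1.
rewrite leq_eqVlt ltnS leqn0 cards_eq0 => /orP [/cards1P [v Sv] | /eqP S0].
- exists v; move: cutS; rewrite Sv /vertex_cut cardsC1.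
  by case: connected_on; rewrite //= leqNgt -ltnS (ltn_predK n3) n3.
- move: cutS; rewrite S0 /vertex_cut setC0 cardsT -/(connected_graph e) conn.
  by rewrite leqNgt (ltnW n3).
Qed.

Definition induced (A : {set T}) : rel T :=
  [rel u w | [&& e u w, u \in A & w \in A]].

Definition component (A : {set T}) (x : T) : {set T} :=
  [set z | connect (induced A) x z].

Definition pendant_at (v : T) (C : {set T}) : Prop :=
  forall s, s \notin v |: C -> nbhd e s :&: C = set0.

Lemma mem_component (A : {set T}) x : x \in component A x.
Proof. by rewrite inE connect0. Qed.

Lemma component_sub (A : {set T}) x : x \in A -> component A x \subset A.
Proof.
move=> xA; apply/subsetP => z; rewrite inE => /connectP [p + ->].
by elim: p x xA => //= a p IH u uA /andP [/and3P [_ _ aA]]; apply: IH.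
Qed.

Hypothesis e_sym : symmetric e.

Lemma induced_sym (A : {set T}) : symmetric (induced A).
Proof. by move=> u w; rewrite /induced /= e_sym (andbC (u \in A)). Qed.

Lemma component_pendant v x :
  x != v -> pendant_at v (component [set~ v] x).
Proof.
move=> xv s; rewrite !inE negb_or => /andP [sv xs].
apply/setP => u; rewrite !inE; apply/negbTE/andP => [[esu xu]].
have uA : u \in [set~ v] by apply: (subsetP (@component_sub _ x _)); rewrite ?inE.
move/negP: xs; apply; apply: connect_trans xu _; apply: connect1.
by rewrite /induced /= e_sym esu uA !inE.
Qed.

Lemma small_component (A : {set T}) :
  ~~ connected_on e A -> exists2 x, x \in A & 2 * #|component A x| <= #|A|.
Proof.
move=> /forall_inPn [x xA /forall_inPn [y yA nxy]].
have disjxy : component A x :&: component A y = set0.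
  apply/setP => z; rewrite !inE; apply/negbTE/andP => [[xz yz]].
  move/negP: nxy; apply.
  by apply: connect_trans xz _; rewrite (sym_connect_sym (induced_sym A)).
have : #|component A x| + #|component A y| <= #|A|.
  rewrite -cardsUI disjxy cards0 addn0.
  by apply: subset_leq_card; rewrite subUset !component_sub.
case: (leqP #|component A x| #|component A y|) => le_xy sum_le.
- by exists x => //; lia.
- by exists y => //; lia.
Qed.

Hypotheses (e_irr : irreflexive e) (min_deg3 : forall v, 3 <= #|nbhd e v|).

Lemma F_number_ge_pendant v (C : {set T}) :
  C != set0 -> pendant_at v C -> #|T| - #|C| <= F_number e.
Proof.
move=> C0 pendC.
have card_setC (X : {set T}) : #|~: X| = #|T| - #|X| by rewrite [LHS]cardsCs setCK.
case: (eqVneq #|nbhd e v :&: C| 1) => [/eqP/cards1P [w vCw] | vC1].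
- have /setIP [evw wC] : w \in nbhd e v :&: C by rewrite vCw set11.
  have nbhd_w : nbhd e w :\ v \subset nbhd e w :&: (C :\ w).
    apply/subsetP => u /setD1P [uv]; rewrite !inE => ewu; rewrite ewu /=.
    apply/andP; split; first by apply: contraTneq ewu => ->; rewrite e_irr.
    apply: contraT => uC; have : w \in nbhd e u :&: C by rewrite !inE e_sym ewu.
    by rewrite pendC ?inE // negb_or uv.
  have two_w : 2 <= #|nbhd e w :&: (C :\ w)|.
    apply: leq_trans (subset_leq_card nbhd_w).
    by have := min_deg3 w; rewrite (cardsD1 v (nbhd e w)); case: (v \in _); lia.
  have stalled_w : stalled e (~: (C :\ w)).
    apply: stalled_setC => s; rewrite !inE negb_and negbK => /orP [/eqP -> | sC].
      by rewrite neq_ltn two_w orbT.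
    case: (eqVneq s v) => [-> | sv]; first by rewrite setIDA vCw setDv cards0.
    suff -> : nbhd e s :&: (C :\ w) = set0 by rewrite cards0.
    by apply/eqP; rewrite -subset0 -(pendC s) ?setIS ?subsetDl // !inE negb_or sv.
  have proper_w : ~: (C :\ w) != setT.
    apply: contraTneq two_w => /eqP; rewrite -setC0 (inj_eq (inv_inj setCK)).
    by move=> /eqP ->; rewrite setI0 cards0.
  apply: leq_trans (stalled_le_F_number stalled_w proper_w).
  by rewrite card_setC leq_sub2l // subset_leq_card // subD1set.
- have stalledC : stalled e (~: C).
    apply: stalled_setC => s sC; case: (eqVneq s v) => [-> // | sv].
    by rewrite pendC ?cards0 // !inE negb_or sv.
  have properC : ~: C != setT.
    by apply: contraNneq C0 => /eqP; rewrite -setC0 (inj_eq (inv_inj setCK)).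
  by apply: leq_trans (stalled_le_F_number stalledC properC); rewrite card_setC.
Qed.

End Connectivity.

Theorem lemma4 (T : finType) (e : rel T) :
  symmetric e -> irreflexive e ->
  connected_graph e ->
  (forall v : T, 3 <= #|nbhd e v|) ->
  kappa e = 1 ->
  (#|T| + 1) %/ 2 <= F_number e.
Proof.
move=> e_sym e_irr conn min_deg3 kappa1.
have n3 : 2 < #|T|.
  have /card_gt0P [x0 _] : 0 < #|T|.
    by rewrite -kappa1 -cardsT kappa_min ?vertex_cutT.
  exact: leq_trans (min_deg3 x0) (max_card _).
have [v disconn] := cut_vertex_of_kappa1 conn n3 kappa1.
have [x xA small] := small_component e_sym disconn.
have xv : x != v by move: xA; rewrite !inE.
have C0 : component e [set~ v] x != set0.
  by apply/set0Pn; exists x; apply: mem_component.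
have := F_number_ge_pendant e_sym e_irr min_deg3 C0 (component_pendant e_sym xv).
by move: small; rewrite cardsC1; lia.
Qed.
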